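(* Let $X$ be a finite simplicial complex and $d\ge0$. There is a one-to-one correspondence between the equivalence classes of $\sim^{\uparrow}_{d+1}$ and the distinct maps of the form $B_{d+1}FB_{d+1}^\intercal$ (with $F$ a smooth map $C_{d+1}(X)\to C_{d+1}(X)$), realized by $[F]\mapsto B_{d+1}FB_{d+1}^\intercal$. Similarly, there is a one-to-one correspondence between the equivalence classes of $\sim^{\downarrow}_{d-1}$ and the distinct maps of the form $B_d^\intercal HB_d$ (with $H$ a smooth map $C_{d-1}(X)\to C_{d-1}(X)$), realized by $[H]\mapsto B_d^\intercal HB_d$.
   Context: A finite simplicial complex $X$ on vertex set $\{1,\dots,n\}$ is a collection of nonempty subsets closed under taking nonempty subsets; $X_d$ is the set of simplices with $d+1$ vertices; a $d$-simplex with vertices $i_0<\dots<i_d$ is written $[i_0,\dots,i_d]$. $C_d(X)$ is the real vector space with basis $X_d$ and inner product making $X_d$ orthonormal ($C_{-1}(X)=0$). The boundary map is $\partial_d[i_0,\dots,i_d]=\sum_{k=0}^d(-1)^k[i_0,\dots,\widehat{i_k},\dots,i_d]$ with matrix $B_d$; $B_d^\intercal$ its transpose. $P_{d+1}$ is the orthogonal projection of $C_{d+1}(X)$ onto $\operatorname{im}(B_{d+1}^\intercal)$ and $Q_{d-1}$ is the orthogonal projection of $C_{d-1}(X)$ onto $\operatorname{im}(B_d)$. On smooth maps $C_{d+1}(X)\to C_{d+1}(X)$ the equivalence relation $\sim^{\uparrow}_{d+1}$ is $\mathcal A\sim^{\uparrow}_{d+1}\mathcal B\iff P_{d+1}\mathcal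 AP_{d+1}=P_{d+1}\mathcal BP_{d+1}$; on smooth maps $C_{d-1}(X)\to C_{d-1}(X)$ the relation $\sim^{\downarrow}_{d-1}$ is $\mathcal A\sim^{\downarrow}_{d-1}\mathcal B\iff Q_{d-1}\mathcal AQ_{d-1}=Q_{d-1}\mathcal BQ_{d-1}$. *)

From HB Require Import structures.
From mathcomp Require Import all_boot all_order all_algebra.
From mathcomp Require Import all_classical all_reals.
From mathcomp Require Import topology normedtype derive.
Set Implicit Arguments. Unset Strict Implicit. Unset Printing Implicit Defensive.
Import Order.TTheory GRing.Theory Num.Theory.
Local Open Scope ring_scope.

(* A finite simplicial complex on the vertex set {0,...,n-1} (= 'I_n, a
   relabelling of {1,...,n}): a family of nonempty vertex sets closed under
   taking nonempty subsets. *)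
Definition is_simplicial_complex (n : nat) (X : {set {set 'I_n}}) : Prop :=
  (forall s, s \in X -> s != finset.set0) /\
  (forall s t : {set 'I_n}, s \in X -> t \subset s -> t != finset.set0 -> t \in X).

(* faces of X with exactly k vertices, i.e. X_{k-1}; (faces X 0) is empty,
   so C_{-1}(X) = 0. *)
Definition faces (n : nat) (X : {set {set 'I_n}}) (k : nat) : {set {set 'I_n}} :=
  [set s in X | #|s| == k].

(* C_{k-1}(X) is represented as column vectors 'cV_#|faces X k|, with the
   standard (orthonormal) basis indexed by faces through enum_val. *)

(* sign (-1)^j where v is the j-th vertex (0-based, increasing order) of s *)
Definition face_sign (R : ringType) (n : nat) (s : {set 'I_n}) (v : 'I_n) : R :=
  (-1) ^+ #|[set w in s | (w < v)%N]|.

(* Boundary matrix from simplices with k+1 vertices to simplices with k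
   vertices: B_d = boundary X d. *)
Definition boundary (R : ringType) (n : nat) (X : {set {set 'I_n}}) (k : nat)
  : 'M[R]_(#|faces X k|, #|faces X k.+1|) :=
  \matrix_(i, j)
    let sigma := enum_val (A := faces X k.+1) j in
    let tau := enum_val (A := faces X k) i in
    \sum_(v in sigma) (if tau == sigma :\ v then face_sign R sigma v else 0).

(* P is the orthogonal projection onto the column space im(M) of M *)
Definition is_orth_proj (R : fieldType) (m p : nat) (P : 'M[R]_m) (M : 'M[R]_(m, p))
  : Prop :=
  P^T = P /\ P *m P = P /\ (P^T == M^T)%MS.

Fixpoint smooth_upto (R : realType) (V : normedModType R) (k : nat) (f : V -> V)
  : Prop :=
  match k with
  | 0 => continuous f
  | k'.+1 => continuous f /\
      forall v : V, (forall x, derivable f x v) /\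
                    smooth_upto k' (fun x => 'D_v f x)
  end.

Definition smooth (R : realType) (V : normedModType R) (f : V -> V) : Prop :=
  forall k, smooth_upto k f.

Definition proj_equiv (R : ringType) (m : nat) (P : 'M[R]_m)
  (A B : 'cV[R]_m -> 'cV[R]_m) : Prop :=
  (fun x => P *m A (P *m x)) = (fun x => P *m B (P *m x)).

From HB Require Import structures.
From mathcomp Require Import all_boot all_order all_algebra.
From mathcomp Require Import all_classical all_reals.
From mathcomp Require Import topology normedtype derive.
Import Order.TTheory GRing.Theory Num.Theory.
Local Open Scope ring_scope.

(* If P is the orthogonal projection onto im M, then P M = M and P = M Z for
   some Z, hence also M^T P = M^T and P = Z^T M^T by symmetry of P.  So
   P A P = Z^T (M^T A M) Z and M^T A M = M^T (P A P) M: each of the two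
   sandwiches determines the other, for arbitrary maps A. *)

Section OrthogonalProjection.

Variables (R : fieldType) (m p : nat) (P : 'M[R]_m) (M : 'M[R]_(m, p)).
Hypothesis PprojM : is_orth_proj P M.

Lemma orth_proj_mulmx_range : P *m M = M.
Proof.
have [_ [PP /andP[_ /submxP[W MW]]]] := PprojM.
have -> : M = P *m W^T by rewrite -[M]trmxK MW trmx_mul trmxK.
by rewrite mulmxA PP.
Qed.

Lemma orth_proj_trmx_mulmx : M^T *m P = M^T.
Proof.
by have [PT _] := PprojM; rewrite -[in LHS]PT -trmx_mul orth_proj_mulmx_range.
Qed.

Lemma orth_proj_factor : exists Z : 'M[R]_(p, m), P = M *m Z.
Proof.
have [_ [_ /andP[/submxP[Z PZ] _]]] := PprojM.
by exists Z^T; rewrite -[LHS]trmxK PZ trmx_mul trmxK.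
Qed.

Lemma proj_equiv_sandwich (F G : 'cV[R]_m -> 'cV[R]_m) :
  proj_equiv P F G <->
  (fun y => M^T *m F (M *m y)) = (fun y => M^T *m G (M *m y)).
Proof.
split=> [eqFG | eqMFG].
  apply: funext => y.
  have /= := congr1 (fun f => M^T *m f (M *m y)) eqFG.
  by rewrite !mulmxA orth_proj_mulmx_range !orth_proj_trmx_mulmx.
have [Z PZ] := orth_proj_factor.
have PZT : P = Z^T *m M^T by have [PT _] := PprojM; rewrite -PT PZ trmx_mul.
apply: funext => x.
have /= := congr1 (fun f => f (Z *m x)) eqMFG.
by rewrite [in P *m x]PZ PZT -!mulmxA => ->.
Qed.

End OrthogonalProjection.

Theorem mainTheorem8 (R : realType) (n : nat) (X : {set {set 'I_n}})
  (hX : is_simplicial_complex X) (d : nat) :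
  (* up: classes of ~^up_{d+1}  <->  maps B_{d+1} F B_{d+1}^T *)
  (forall P : 'M[R]_(#|faces X d.+2|),
     is_orth_proj P (boundary R X d.+1)^T ->
     forall F G : 'cV[R]_(#|faces X d.+2|) -> 'cV[R]_(#|faces X d.+2|),
       smooth F -> smooth G ->
       (proj_equiv P F G <->
        (fun y => boundary R X d.+1 *m F ((boundary R X d.+1)^T *m y)) =
        (fun y => boundary R X d.+1 *m G ((boundary R X d.+1)^T *m y)))) /\
  (* down: classes of ~^down_{d-1}  <->  maps B_d^T H B_d *)
  (forall Q : 'M[R]_(#|faces X d|),
     is_orth_proj Q (boundary R X d) ->
     forall H K : 'cV[R]_(#|faces X d|) -> 'cV[R]_(#|faces X d|),
       smooth H -> smooth K ->
       (proj_equiv Q H K <->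
        (fun y => (boundary R X d)^T *m H (boundary R X d *m y)) =
        (fun y => (boundary R X d)^T *m K (boundary R X d *m y)))).
Proof.
split.
  move=> P PprojBT F G _ _.
  by have := @proj_equiv_sandwich _ _ _ _ _ PprojBT F G; rewrite trmxK.
by move=> Q QprojB H K _ _; exact: (@proj_equiv_sandwich _ _ _ _ _ QprojB H K).
Qed.
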